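(* In an operational theory, let $\mathcal{M}_1,\mathcal{M}_2,\mathcal{M}_3$ be binary-outcome measurements (outcomes $X_i\in\{0,1\}$) that are pairwise jointly measurable, with joint measurements $\mathcal{M}_{ij}$ ($i<j$), and suppose there is a preparation $\mathcal{P}_*$ such that for all $i\neq j$, $p(X_i=0,X_j=1|\mathcal{M}_{ij};\mathcal{P}_* )=p(X_i=1,X_j=0|\mathcal{M}_{ij};\mathcal{P}_* )=\tfrac12$. Then $\mathcal{M}_1,\mathcal{M}_2,\mathcal{M}_3$ are not (triplewise) jointly measurable.
   Context: An operational theory assigns outcome probabilities $p(X|M;P)$ to preparation and measurement procedures; measurements $\mathcal{M}$ are equivalence classes of measurement procedures giving identical statistics for all preparations. A set of measurements $\{\mathcal{M}_1,\dots,\mathcal{M}_N\}$ is jointly measurable if there exists a measurement $\mathcal{M}$ whose outcome set is the Cartesian product of the outcome sets of the $\mathcal{M}_k$ and such that, for every preparation and every subset $S$ of the indices, the outcome distribution of the joint measurement of $\{\mathcal{M}_s:s\in S\}$ (in particular of each single $\mathcal{M}_s$) is the corresponding marginal of the outcome distribution of $\mathcal{M}$. A set is pairwise jointly measurable if every two-element subset is jointly measurable. *)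

From mathcomp Require Import all_boot all_order all_algebra.
Set Implicit Arguments. Unset Strict Implicit. Unset Printing Implicit Defensive.
Import Order.TTheory GRing.Theory Num.Theory.
Local Open Scope ring_scope.

(* Measurements are identified
   with their statistics (equivalence classes of procedures); all notions below
   only depend on the statistics. *)
Record opTheory (R : realFieldType) := OpTheory {
  Prep : Type;
  Meas : finType -> Type;
  prob : forall O : finType, Meas O -> Prep -> O -> R;
  prob_ge0 : forall O (M : Meas O) P x, 0 <= prob M P x;
  prob_sum1 : forall O (M : Meas O) P, \sum_(x : O) prob M P x = 1
}.

Arguments prob {R T O} M P x : rename.

Section JM.
Variables (R : realFieldType) (T : opTheory R).

Definition joint2 (M1 M2 : Meas T bool) (M12 : Meas T (bool * bool)%type) : Prop :=
  forall P : Prep T,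
    (forall x : bool, \sum_(y : bool) prob M12 P (x, y) = prob M1 P x) /\
    (forall y : bool, \sum_(x : bool) prob M12 P (x, y) = prob M2 P y).

Definition joint3 (M1 M2 M3 : Meas T bool)
    (M12 M13 M23 : Meas T (bool * bool)%type) : Prop :=
  exists M : Meas T (bool * bool * bool)%type, forall P : Prep T,
    (forall x : bool, \sum_(y : bool) \sum_(z : bool) prob M P (x, y, z) = prob M1 P x) /\
    (forall y : bool, \sum_(x : bool) \sum_(z : bool) prob M P (x, y, z) = prob M2 P y) /\
    (forall z : bool, \sum_(x : bool) \sum_(y : bool) prob M P (x, y, z) = prob M3 P z) /\
    (forall x y : bool, \sum_(z : bool) prob M P (x, y, z) = prob M12 P (x, y)) /\
    (forall x z : bool, \sum_(y : bool) prob M P (x, y, z) = prob M13 P (x, z)) /\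
    (forall y z : bool, \sum_(x : bool) prob M P (x, y, z) = prob M23 P (y, z)).

End JM.

From mathcomp Require Import all_boot all_order all_algebra.
From mathcomp Require Import lra.
Import Order.TTheory GRing.Theory Num.Theory.
Local Open Scope ring_scope.

(* Perfect pairwise anticorrelation of three bits is impossible: every one of the
   eight outcomes (x, y, z) has at least one agreeing pair, so under any
   probability distribution the three disagreement probabilities sum to at most
   2, not 3.  A triplewise joint measurement would be such a distribution on
   Pstar, with the given pairwise statistics as its marginals. *)

Section ThreeBits.
Variable R : realFieldType.

Definition anticorrelated (p : bool * bool -> R) : Prop :=
  p (false, true) + p (true, false) = 1.

Lemma anticorrelated_halves (p : bool * bool -> R) :
  p (false, true) = 1 / 2 /\ p (true, false) = 1 / 2 -> anticorrelated p.
Proof. by rewrite /anticorrelated => -[-> ->]; lra. Qed.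

Lemma sum_bool3 (q : bool * bool * bool -> R) :
  \sum_(t : bool * bool * bool) q t =
  \sum_(x : bool) \sum_(y : bool) \sum_(z : bool) q (x, y, z).
Proof. by rewrite pair_big /= pair_big /=; apply: eq_bigr => -[[]]. Qed.

Lemma not_pairwise_anticorrelated (q : bool * bool * bool -> R)
    (p12 p13 p23 : bool * bool -> R) :
  (forall t, 0 <= q t) -> \sum_t q t = 1 ->
  (forall x y, \sum_(z : bool) q (x, y, z) = p12 (x, y)) ->
  (forall x z, \sum_(y : bool) q (x, y, z) = p13 (x, z)) ->
  (forall y z, \sum_(x : bool) q (x, y, z) = p23 (y, z)) ->
  ~ [/\ anticorrelated p12, anticorrelated p13 & anticorrelated p23].
Proof.
move=> q_ge0; rewrite sum_bool3 => q_sum1 e12 e13 e23 [].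
rewrite /anticorrelated -!e12 -!e13 -!e23 !big_bool /= in q_sum1 *.
have := q_ge0 (true, true, true); have := q_ge0 (false, false, false).
lra.
Qed.

End ThreeBits.

Theorem corollary1 (R : realFieldType) (T : opTheory R)
    (M1 M2 M3 : Meas T bool) (M12 M13 M23 : Meas T (bool * bool)%type)
    (H12 : joint2 M1 M2 M12) (H13 : joint2 M1 M3 M13) (H23 : joint2 M2 M3 M23)
    (Pstar : Prep T)
    (h12 : prob M12 Pstar (false, true) = 1 / 2 /\ prob M12 Pstar (true, false) = 1 / 2)
    (h13 : prob M13 Pstar (false, true) = 1 / 2 /\ prob M13 Pstar (true, false) = 1 / 2)
    (h23 : prob M23 Pstar (false, true) = 1 / 2 /\ prob M23 Pstar (true, false) = 1 / 2) :
  ~ joint3 M1 M2 M3 M12 M13 M23.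
Proof.
move=> [M HM]; have [_ [_ [_ [e12 [e13 e23]]]]] := HM Pstar.
apply: (@not_pairwise_anticorrelated _ (prob M Pstar) (prob M12 Pstar)
  (prob M13 Pstar) (prob M23 Pstar) (prob_ge0 M Pstar) (prob_sum1 M Pstar)
  e12 e13 e23).
by split; apply: anticorrelated_halves.
Qed.
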